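(* Let $\mu,\nu\in\mathbb{R}$. The double inequality $$\frac{x^2+\mu x+12}{12x^4(x+1)^2}<[\psi'(x)]^2+\psi''(x)<\frac{x^2+\nu x+12}{12x^4(x+1)^2}$$ holds for all $x\in(0,\infty)$ if and only if $\mu\le0$ and $\nu\ge4$.
   Context: $\Gamma$ is Euler's gamma function, $\psi=\Gamma'/\Gamma$ is the digamma function, and $\psi',\psi''$ are its first and second derivatives. *)

From Stdlib Require Import Reals Lra ClassicalEpsilon Factorial.
Open Scope R_scope.

(* The (unique, if it exists) real satisfying P, or 0 if there is none.
   Used to turn limits / derivatives into total functions. *)
Definition the_or0 (P : R -> Prop) : R :=
  match excluded_middle_informative (exists l, P l) with
  | left H => proj1_sig (constructive_indefinite_description P H)
  | right _ => 0
  end.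

Fixpoint poch (x : R) (n : nat) : R :=
  match n with
  | O => x
  | S m => poch x m * (x + INR (S m))
  end.

(* Gauss/Euler product: Gamma x = lim_n n! n^x / (x (x+1) ... (x+n)), x > 0 *)
Definition gauss_seq (x : R) (n : nat) : R :=
  INR (fact n) * Rpower (INR n) x / poch x n.

(* Euler's gamma function (meaningful for x > 0) *)
Definition Gamma (x : R) : R := the_or0 (Un_cv (gauss_seq x)).

(* derivative of f at x (as a total function; 0 where f is not differentiable) *)
Definition deriv (f : R -> R) (x : R) : R := the_or0 (derivable_pt_lim f x).

Definition psi (x : R) : R := deriv Gamma x / Gamma x.
Definition psi1 (x : R) : R := deriv psi x.
Definition psi2 (x : R) : R := deriv psi1 x.

(* Write frac_bound m x = (x^2 + m x + 12) / (12 x^4 (x+1)^2), which increases with m.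

   1. Series.  Taking logarithms in Gauss's product, ln Gamma is the sum of a series
      (lgamma_term) whose termwise derivatives give psi, psi' = sum 1/(x+k)^2 and
      psi'' = sum -2/(x+k)^3.  All four series admit majorants C/(k(k+1)) locally
      uniformly on (0,oo), so the Stdlib theorem on termwise differentiation of
      uniformly convergent series identifies psi, psi1, psi2 with the series sums.
   2. Telescoping.  A function G with G(z+1) < G(z) for z > 0 and G(z) = O(1/z) at
      +oo is positive on (0,oo).  With psi'(z) = 1/z^2 + psi'(z+1) and
      psi''(z) = -2/z^3 + psi''(z+1), every bound we need reduces to a rational
      inequality between z and z + 1, checked with [field].
   3. This yields truncated asymptotic bounds for psi', psi'' and then
      frac_bound 0 < psi'^2 + psi'' < frac_bound 4; monotonicity in m gives "if".
   4. Sharpness ("only if"): if mu > 0 the lower bound fails near 0, and if nu < 4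
      the upper bound fails near +oo, at explicit points. *)

From Stdlib Require Import Reals Lra Lia Factorial ClassicalEpsilon.
From Coquelicot Require Import Coquelicot.
Open Scope R_scope.

Lemma the_or0_unique (P : R -> Prop) (l : R) :
  P l -> (forall a b, P a -> P b -> a = b) -> the_or0 P = l.
Proof.
  intros Hl Huniq. unfold the_or0.
  destruct (excluded_middle_informative _) as [Hex | Hnex].
  - destruct (constructive_indefinite_description P Hex) as [l' Hl']; simpl.
    exact (Huniq _ _ Hl' Hl).
  - exfalso; apply Hnex; exists l; exact Hl.
Qed.

Lemma deriv_eq (f : R -> R) (x l : R) : derivable_pt_lim f x l -> deriv f x = l.
Proof.
  intros Hd. apply the_or0_unique; [exact Hd|].
  intros a b Ha Hb. exact (uniqueness_limite f x a b Ha Hb).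
Qed.

Lemma derivable_pt_lim_pos_ext (f g : R -> R) (x l : R) :
  0 < x -> (forall y, 0 < y -> f y = g y) ->
  derivable_pt_lim g x l -> derivable_pt_lim f x l.
Proof.
  intros Hx Hfg Hg eps Heps. destruct (Hg eps Heps) as [d Hd].
  assert (Hpos : 0 < Rmin d (x / 2)) by (apply Rmin_pos; [apply cond_pos | lra]).
  exists (mkposreal _ Hpos). intros h Hh0 Hh; simpl in Hh.
  pose proof (Rmin_l d (x / 2)). pose proof (Rmin_r d (x / 2)).
  assert (Hhx : Rabs h < x / 2) by lra. apply Rabs_def2 in Hhx.
  rewrite !Hfg by lra. apply Hd; [exact Hh0 | lra].
Qed.

Lemma INR_S_pos (n : nat) : 0 < INR (S n).
Proof. apply lt_0_INR; lia. Qed.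

Lemma eventually_small_inv (C eps : R) :
  0 < eps -> exists N, forall n, (N <= n)%nat -> C / INR (S n) < eps.
Proof.
  intros Heps. destruct (INR_archimed eps (Rabs C) Heps) as [N HN].
  exists N. intros n Hn. pose proof (INR_S_pos n).
  assert (INR N <= INR (S n)) by (apply le_INR; lia).
  apply Rlt_div_l; [lra|].
  pose proof (Rle_abs C). pose proof (pos_INR N). nra.
Qed.

Lemma Un_cv_const (c : R) : Un_cv (fun _ => c) c.
Proof. intros eps Heps. exists O. intros n _. unfold Rdist. rewrite Rminus_diag, Rabs_R0. exact Heps. Qed.

Lemma Un_cv_shift (U : nat -> R) (l : R) : Un_cv U l -> Un_cv (fun n => U (S n)) l.
Proof. intros H eps Heps. destruct (H eps Heps) as [N HN]. exists N. intros n Hn. apply HN. lia. Qed.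

Lemma Un_cv_of_shift (U : nat -> R) (l : R) : Un_cv (fun n => U (S n)) l -> Un_cv U l.
Proof.
  intros H eps Heps. destruct (H eps Heps) as [N HN]. exists (S N). intros [|n] Hn; [lia|].
  apply HN. lia.
Qed.

(* Sum of a series of functions, [SP u n y = u 0 y + ... + u n y] being the
   Stdlib's partial sums (the value is 0 where the partial sums diverge). *)
Definition series_sum (u : nat -> R -> R) (y : R) : R :=
  the_or0 (Un_cv (fun n => SP u n y)).

(* For k >= 1 the k-th term at [y] is at most C/(k(k+1)) in absolute value.
   These majorants telescope, which gives explicit bounds C/(n+1) on tails. *)
Definition majorized (u : nat -> R -> R) (C y : R) : Prop :=
  0 <= C /\ forall k, (1 <= k)%nat -> Rabs (u k y) * (INR k * (INR k + 1)) <= C.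

Section MajorizedSeries.

Variables (u : nat -> R -> R) (C y : R).
Hypothesis Hmaj : majorized u C y.

Lemma partial_sum_tail (n m : nat) :
  (n <= m)%nat -> Rabs (SP u m y - SP u n y) <= C * (/ INR (S n) - / INR (S m)).
Proof.
  destruct Hmaj as [HC Hterm].
  induction 1 as [|m Hnm IH].
  - rewrite !Rminus_diag, Rabs_R0. lra.
  - change (SP u (S m) y) with (SP u m y + u (S m) y).
    pose proof (INR_S_pos m) as Hk. rewrite (S_INR (S m)).
    set (k := INR (S m)) in *.
    assert (Hu : Rabs (u (S m) y) <= C * (/ k - / (k + 1))).
    { replace (C * (/ k - / (k + 1))) with (C / (k * (k + 1))) by (field; lra).
      apply Rle_div_r; [nra | apply Hterm; lia]. }
    pose proof (Rabs_triang (SP u m y - SP u n y) (u (S m) y)).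
    replace (SP u m y + u (S m) y - SP u n y)
      with (SP u m y - SP u n y + u (S m) y) by ring.
    lra.
Qed.

Lemma partial_sum_tail_le (n m : nat) :
  (n <= m)%nat -> Rabs (SP u m y - SP u n y) <= C / INR (S n).
Proof.
  intros Hnm. pose proof (partial_sum_tail n m Hnm). destruct Hmaj as [HC _].
  assert (0 < / INR (S m)) by apply Rinv_0_lt_compat, INR_S_pos.
  unfold Rdiv. nra.
Qed.

Lemma series_sum_cv : Un_cv (fun n => SP u n y) (series_sum u y).
Proof.
  assert (Hcauchy : Cauchy_crit (fun n => SP u n y)).
  { intros eps Heps. destruct (eventually_small_inv C eps Heps) as [N HN].
    exists N. intros n m Hn Hm. unfold Rdist.
    destruct (Nat.le_ge_cases n m) as [Hnm | Hmn].
    - rewrite Rabs_minus_sym.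
      eapply Rle_lt_trans; [apply partial_sum_tail_le, Hnm | apply HN, Hn].
    - eapply Rle_lt_trans; [apply partial_sum_tail_le, Hmn | apply HN, Hm]. }
  destruct (Rcomplete.R_complete _ Hcauchy) as [l Hl].
  unfold series_sum. rewrite (the_or0_unique _ l Hl); [exact Hl|].
  intros a b Ha Hb. exact (UL_sequence _ a b Ha Hb).
Qed.

Lemma series_sum_tail (n : nat) : Rabs (series_sum u y - SP u n y) <= C / INR (S n).
Proof.
  apply Rnot_lt_le. intros Hgt.
  set (e := Rabs (series_sum u y - SP u n y) - C / INR (S n)).
  destruct (series_sum_cv e ltac:(unfold e; lra)) as [N HN].
  specialize (HN (max N n) ltac:(lia)). unfold Rdist in HN.
  pose proof (partial_sum_tail_le n (max N n) ltac:(lia)).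
  pose proof (Rabs_triang (series_sum u y - SP u (max N n) y)
                          (SP u (max N n) y - SP u n y)).
  rewrite Rabs_minus_sym in HN.
  replace (series_sum u y - SP u (max N n) y + (SP u (max N n) y - SP u n y))
    with (series_sum u y - SP u n y) in * by ring.
  unfold e in HN. lra.
Qed.

End MajorizedSeries.

Lemma majorized_weaken (u : nat -> R -> R) (C C' y : R) :
  majorized u C y -> C <= C' -> majorized u C' y.
Proof.
  intros [HC Hterm] HCC'. split; [lra|]. intros k Hk. specialize (Hterm k Hk). lra.
Qed.

Lemma series_sum_step (u : nat -> R -> R) (C C' z : R) :
  majorized u C z -> majorized u C' (z + 1) ->
  (forall k, u (S k) z = u k (z + 1)) ->
  series_sum u z = u O z + series_sum u (z + 1).
Proof.
  intros Hz Hz1 Hshift.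
  assert (Hpartial : forall n, SP u (S n) z = u O z + SP u n (z + 1)).
  { induction n as [|n IH].
    - unfold SP; simpl. rewrite Hshift. reflexivity.
    - change (SP u (S n) z + u (S (S n)) z = u O z + (SP u n (z + 1) + u (S n) (z + 1))).
      rewrite IH, Hshift. ring. }
  apply (UL_sequence (fun n => SP u (S n) z)).
  - exact (Un_cv_shift _ _ (series_sum_cv u C z Hz)).
  - apply (Un_cv_ext (fun n => u O z + SP u n (z + 1))); [intros n; symmetry; apply Hpartial|].
    exact (CV_plus _ _ _ _ (Un_cv_const _) (series_sum_cv u C' (z + 1) Hz1)).
Qed.

Lemma series_sum_le (u : nat -> R -> R) (C y b : R) :
  majorized u C y -> (forall n, SP u n y <= b) -> series_sum u y <= b.
Proof. intros Hmaj Hb. exact (Rle_cv_lim Hb (series_sum_cv u C y Hmaj) (Un_cv_const b)). Qed.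

Lemma series_sum_ge (u : nat -> R -> R) (C y b : R) :
  majorized u C y -> (forall n, b <= SP u n y) -> b <= series_sum u y.
Proof. intros Hmaj Hb. exact (Rle_cv_lim Hb (Un_cv_const b) (series_sum_cv u C y Hmaj)). Qed.

Lemma series_sum_derivable (u u' : nat -> R -> R) (C' x : R) :
  0 < x ->
  (forall k y, 0 < y -> derivable_pt_lim (u k) y (u' k y)) ->
  (forall y, 0 < y -> exists C, majorized u C y) ->
  (forall y, x / 2 < y < 3 * x / 2 -> majorized u' C' y) ->
  derivable_pt_lim (series_sum u) x (series_sum u' x).
Proof.
  intros Hx Hder Hu Hu'. set (r := mkposreal (x / 2) ltac:(lra)).
  assert (Hball : forall y, Boule x r y -> x / 2 < y < 3 * x / 2).
  { intros y Hy. unfold Boule in Hy. simpl in Hy. apply Rabs_def2 in Hy. lra. }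
  assert (HC' : 0 <= C') by (apply (Hu' x); lra).
  apply (CVU_derivable (SP u) (SP u') (series_sum u) (series_sum u') x r).
  - intros eps Heps. destruct (eventually_small_inv C' eps Heps) as [N HN].
    exists N. intros n y Hn Hy.
    eapply Rle_lt_trans; [apply series_sum_tail, Hu', Hball, Hy | apply HN, Hn].
  - intros y Hy. destruct (Hu y ltac:(pose proof (Hball y Hy); lra)) as [C HC].
    exact (series_sum_cv u C y HC).
  - intros n y Hy. pose proof (Hball y Hy).
    induction n as [|n IH]; [apply Hder; lra|].
    apply (derivable_pt_lim_plus (SP u n) (u (S n))); [exact IH | apply Hder; lra].
  - unfold Boule. rewrite Rminus_diag, Rabs_R0. apply cond_pos.
Qed.

Lemma ln_1p_le (u : R) : -1 < u -> ln (1 + u) <= u.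
Proof.
  intros Hu. rewrite <- (ln_exp u) at 2. apply ln_le; [lra | apply exp_ineq1_le].
Qed.

Lemma ln_1p_div_bounds (n y : R) :
  0 < n -> 0 <= y -> ln (1 + y / n) * n <= y /\ y <= ln (1 + y / n) * (n + y).
Proof.
  intros Hn Hy. assert (Hyn : 0 <= y / n) by (apply Rdiv_le_0_compat; lra).
  pose proof (ln_1p_le (y / n) ltac:(lra)) as Hup.
  pose proof (ln_1p_le (- (y / (n + y)))) as Hlow.
  replace (1 + - (y / (n + y))) with (/ (1 + y / n)) in Hlow by (field; lra).
  rewrite ln_Rinv in Hlow by lra.
  assert (Hq : y / (n + y) < 1) by (apply Rlt_div_l; lra).
  specialize (Hlow ltac:(assert (0 <= y / (n + y)) by (apply Rdiv_le_0_compat; lra); lra)).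
  split.
  - apply Rle_div_r in Hup; lra.
  - assert (Hlow' : y / (n + y) <= ln (1 + y / n)) by lra. apply Rle_div_l in Hlow'; lra.
Qed.

(* Terms of the series for ln Gamma (Euler's product, termwise logarithm) and
   of its three termwise derivatives. *)
Definition lgamma_term (k : nat) (y : R) : R :=
  match k with
  | O => - ln y
  | S j => y * ln (1 + 1 / INR (S j)) - ln (1 + y / INR (S j))
  end.

Definition digamma_term (k : nat) (y : R) : R :=
  match k with
  | O => - / y
  | S j => ln (1 + 1 / INR (S j)) - / (y + INR (S j))
  end.

Definition trigamma_term (k : nat) (y : R) : R := / (y + INR k) ^ 2.

Definition tetragamma_term (k : nat) (y : R) : R := -2 / (y + INR k) ^ 3.

Lemma lgamma_term_derive (k : nat) (y : R) :
  0 < y -> derivable_pt_lim (lgamma_term k) y (digamma_term k y).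
Proof.
  intros Hy. apply is_derive_Reals.
  destruct k as [|j]; unfold lgamma_term, digamma_term; cbv beta iota.
  - auto_derive; [exact Hy | field; lra].
  - pose proof (INR_S_pos j). generalize dependent (INR (S j)); intros n Hn.
    assert (0 < y / n) by (apply Rdiv_lt_0_compat; lra).
    auto_derive; [lra | field; split; [|lra]].
    replace (n + y) with (n * (1 + y / n)) by (field; lra). nra.
Qed.

Lemma digamma_term_derive (k : nat) (y : R) :
  0 < y -> derivable_pt_lim (digamma_term k) y (trigamma_term k y).
Proof.
  intros Hy. apply is_derive_Reals. unfold trigamma_term.
  destruct k as [|j]; unfold digamma_term; cbv beta iota.
  - auto_derive; [lra|]. simpl INR. field; lra.
  - pose proof (INR_S_pos j). generalize dependent (INR (S j)); intros n Hn.
    auto_derive; [lra | field; lra].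
Qed.

Lemma trigamma_term_derive (k : nat) (y : R) :
  0 < y -> derivable_pt_lim (trigamma_term k) y (tetragamma_term k y).
Proof.
  intros Hy. apply is_derive_Reals. unfold trigamma_term, tetragamma_term.
  pose proof (pos_INR k). generalize dependent (INR k); intros n Hn.
  auto_derive; [nra | field; lra].
Qed.

Lemma majorized_intro (u : nat -> R -> R) (C y : R) :
  0 <= C ->
  (forall j : nat, let n := INR (S j) in
     -C <= u (S j) y * (n * (n + 1)) <= C) ->
  majorized u C y.
Proof.
  intros HC Hb. split; [exact HC|]. intros [|j] Hj; [lia|].
  pose proof (INR_S_pos j). specialize (Hb j); simpl in Hb.
  rewrite <- (Rabs_pos_eq (INR (S j) * (INR (S j) + 1))) by nra.
  rewrite <- Rabs_mult. apply Rabs_le. exact Hb.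
Qed.

Lemma lgamma_majorized (y : R) : 0 < y -> majorized lgamma_term (2 * (y + y ^ 2)) y.
Proof.
  intros Hy. apply majorized_intro; [nra|]. intros j n; unfold lgamma_term; cbv beta iota.
  assert (Hn : 1 <= n) by (unfold n; rewrite S_INR; pose proof (pos_INR j); lra).
  destruct (ln_1p_div_bounds n 1 ltac:(lra) ltac:(lra)) as [A1 A2].
  destruct (ln_1p_div_bounds n y ltac:(lra) ltac:(lra)) as [B1 B2].
  fold n. set (A := ln (1 + 1 / n)) in *. set (B := ln (1 + y / n)) in *.
  split.
  - assert (0 <= y * n * (A * (n + 1) - 1)) by (apply Rmult_le_pos; nra).
    assert (0 <= (n + 1) * (y - B * n)) by (apply Rmult_le_pos; lra).
    nra.
  - assert (0 <= y * (n + 1) * (n + y) * (1 - A * n)) by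
      (apply Rmult_le_pos; [apply Rmult_le_pos|]; nra).
    assert (0 <= n * (n + 1) * (B * (n + y) - y)) by (apply Rmult_le_pos; nra).
    apply (Rmult_le_reg_r (n + y)); [lra|]. nra.
Qed.

Lemma digamma_majorized (y : R) : 0 < y -> majorized digamma_term (1 + 2 * y) y.
Proof.
  intros Hy. apply majorized_intro; [lra|]. intros j n; unfold digamma_term; cbv beta iota.
  assert (Hn : 1 <= n) by (unfold n; rewrite S_INR; pose proof (pos_INR j); lra).
  destruct (ln_1p_div_bounds n 1 ltac:(lra) ltac:(lra)) as [A1 A2].
  fold n. set (A := ln (1 + 1 / n)) in *.
  replace ((A - / (y + n)) * (n * (n + 1)))
    with (A * n * (n + 1) - n * (n + 1) / (y + n)) by (field; lra).
  set (Q := n * (n + 1) / (y + n)).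
  assert (HQ : Q * (y + n) = n * (n + 1)) by (unfold Q; field; lra).
  assert (Q <= n + 1) by (apply (Rmult_le_reg_r (y + n)); nra).
  assert (n + 1 - 2 * y <= Q) by (apply (Rmult_le_reg_r (y + n)); nra).
  split; nra.
Qed.

Lemma trigamma_majorized (y : R) : 0 < y -> majorized trigamma_term 2 y.
Proof.
  intros Hy. apply majorized_intro; [lra|]. intros j n; unfold trigamma_term.
  assert (Hn : 1 <= n) by (unfold n; rewrite S_INR; pose proof (pos_INR j); lra).
  fold n. replace (/ (y + n) ^ 2 * (n * (n + 1))) with (n * (n + 1) / (y + n) ^ 2) by (field; lra).
  split.
  - assert (0 <= n * (n + 1) / (y + n) ^ 2) by (apply Rdiv_le_0_compat; nra). lra.
  - apply Rle_div_l; nra.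
Qed.

Lemma tetragamma_majorized (y : R) : 0 < y -> majorized tetragamma_term 4 y.
Proof.
  intros Hy. apply majorized_intro; [lra|]. intros j n; unfold tetragamma_term.
  assert (Hn : 1 <= n) by (unfold n; rewrite S_INR; pose proof (pos_INR j); lra).
  fold n. replace (-2 / (y + n) ^ 3 * (n * (n + 1))) with (- (2 * (n * (n + 1) / (y + n) ^ 3)))
    by (field; lra).
  assert (0 < (y + n) ^ 3) by (apply pow_lt; lra).
  assert (0 <= n * (n + 1) / (y + n) ^ 3) by (apply Rdiv_le_0_compat; nra).
  assert (n * (n + 1) / (y + n) ^ 3 <= 2).
  { apply Rle_div_l; [lra|].
    assert (n ^ 3 <= (y + n) ^ 3) by (apply pow_incr; lra). nra. }
  lra.
Qed.

Definition LogGamma : R -> R := series_sum lgamma_term.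
Definition Digamma : R -> R := series_sum digamma_term.
Definition Trigamma : R -> R := series_sum trigamma_term.
Definition Tetragamma : R -> R := series_sum tetragamma_term.

Lemma LogGamma_derive (x : R) : 0 < x -> derivable_pt_lim LogGamma x (Digamma x).
Proof.
  intros Hx. apply (series_sum_derivable _ _ (1 + 3 * x)); [exact Hx | exact lgamma_term_derive | |].
  - intros y Hy. exists (2 * (y + y ^ 2)). exact (lgamma_majorized y Hy).
  - intros y Hy. apply (majorized_weaken _ (1 + 2 * y)); [apply digamma_majorized|]; lra.
Qed.

Lemma Digamma_derive (x : R) : 0 < x -> derivable_pt_lim Digamma x (Trigamma x).
Proof.
  intros Hx. apply (series_sum_derivable _ _ 2); [exact Hx | exact digamma_term_derive | |].
  - intros y Hy. exists (1 + 2 * y). exact (digamma_majorized y Hy).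
  - intros y Hy. apply trigamma_majorized; lra.
Qed.

Lemma Trigamma_derive (x : R) : 0 < x -> derivable_pt_lim Trigamma x (Tetragamma x).
Proof.
  intros Hx. apply (series_sum_derivable _ _ 4); [exact Hx | exact trigamma_term_derive | |].
  - intros y Hy. exists 2. exact (trigamma_majorized y Hy).
  - intros y Hy. apply tetragamma_majorized; lra.
Qed.

Lemma poch_pos (x : R) (n : nat) : 0 < x -> 0 < poch x n.
Proof.
  intros Hx. induction n as [|n IH]; [exact Hx|].
  change (poch x (S n)) with (poch x n * (x + INR (S n))).
  pose proof (INR_S_pos n). apply Rmult_lt_0_compat; lra.
Qed.

Lemma exp_lgamma_partial_sum (x : R) (n : nat) :
  0 < x -> exp (SP lgamma_term n x) = INR (fact n) * Rpower (INR (S n)) x / poch x n.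
Proof.
  intros Hx. induction n as [|n IH].
  - unfold SP; simpl. rewrite exp_Ropp, exp_ln by exact Hx.
    unfold Rpower. rewrite ln_1, Rmult_0_r, exp_0. field. lra.
  - change (SP lgamma_term (S n) x) with (SP lgamma_term n x + lgamma_term (S n) x).
    rewrite exp_plus, IH. unfold lgamma_term, Rminus.
    rewrite exp_plus, exp_Ropp.
    set (N := INR (S n)). assert (HN : 0 < N) by apply INR_S_pos.
    assert (Hx1 : 0 < 1 + x / N) by (assert (0 < x / N) by (apply Rdiv_lt_0_compat; lra); lra).
    assert (H1 : 0 < 1 + 1 / N) by (assert (0 < 1 / N) by (apply Rdiv_lt_0_compat; lra); lra).
    rewrite exp_ln by exact Hx1.
    change (exp (x * ln (1 + 1 / N))) with (Rpower (1 + 1 / N) x).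
    replace (INR (S (S n))) with (N * (1 + 1 / N)) by (rewrite (S_INR (S n)); fold N; field; lra).
    rewrite <- Rpower_mult_distr by lra.
    change (fact (S n)) with (S n * fact n)%nat. rewrite mult_INR.
    change (poch x (S n)) with (poch x n * (x + N)).
    pose proof (poch_pos x n Hx). fold N. field. lra.
Qed.

Lemma Gamma_exp_LogGamma (x : R) : 0 < x -> Gamma x = exp (LogGamma x).
Proof.
  intros Hx. unfold Gamma. apply the_or0_unique.
  2: { intros a b Ha Hb. exact (UL_sequence _ a b Ha Hb). }
  apply Un_cv_of_shift.
  apply (Un_cv_ext (fun n => exp (SP lgamma_term n x) * (INR (S n) / (x + INR (S n))))).
  { intros n. rewrite exp_lgamma_partial_sum by exact Hx. unfold gauss_seq.
    change (fact (S n)) with (S n * fact n)%nat. rewrite mult_INR.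
    change (poch x (S n)) with (poch x n * (x + INR (S n))).
    pose proof (poch_pos x n Hx). pose proof (INR_S_pos n). field. lra. }
  rewrite <- (Rmult_1_r (exp (LogGamma x))). apply CV_mult.
  - apply (continuity_seq exp); [apply derivable_continuous_pt, derivable_pt_exp|].
    exact (series_sum_cv _ _ _ (lgamma_majorized x Hx)).
  - intros eps Heps. destruct (eventually_small_inv x eps Heps) as [N HN].
    exists N. intros n Hn. specialize (HN n Hn). pose proof (INR_S_pos n). unfold Rdist.
    replace (INR (S n) / (x + INR (S n)) - 1) with (- (x / (x + INR (S n)))) by (field; lra).
    rewrite Rabs_Ropp, Rabs_pos_eq by (apply Rlt_le, Rdiv_lt_0_compat; lra).
    eapply Rle_lt_trans; [|exact HN].
    unfold Rdiv. apply Rmult_le_compat_l; [lra|]. apply Rinv_le_contravar; lra.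
Qed.

Lemma psi_eq_Digamma (x : R) : 0 < x -> psi x = Digamma x.
Proof.
  intros Hx. unfold psi. rewrite Gamma_exp_LogGamma by exact Hx.
  rewrite (deriv_eq Gamma x (exp (LogGamma x) * Digamma x)).
  - pose proof (exp_pos (LogGamma x)). field. lra.
  - apply (derivable_pt_lim_pos_ext Gamma (fun y => exp (LogGamma y))); [exact Hx | exact Gamma_exp_LogGamma|].
    apply (derivable_pt_lim_comp LogGamma exp); [exact (LogGamma_derive x Hx) | apply derivable_pt_lim_exp].
Qed.

Lemma psi1_eq_Trigamma (x : R) : 0 < x -> psi1 x = Trigamma x.
Proof.
  intros Hx. apply deriv_eq.
  exact (derivable_pt_lim_pos_ext psi Digamma x _ Hx psi_eq_Digamma (Digamma_derive x Hx)).
Qed.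

Lemma psi2_eq_Tetragamma (x : R) : 0 < x -> psi2 x = Tetragamma x.
Proof.
  intros Hx. apply deriv_eq.
  exact (derivable_pt_lim_pos_ext psi1 Trigamma x _ Hx psi1_eq_Trigamma (Trigamma_derive x Hx)).
Qed.

Lemma Trigamma_step (z : R) : 0 < z -> Trigamma z = / z ^ 2 + Trigamma (z + 1).
Proof.
  intros Hz. unfold Trigamma.
  rewrite (series_sum_step _ 2 2 z (trigamma_majorized z Hz) (trigamma_majorized (z + 1) ltac:(lra))).
  - unfold trigamma_term at 1. simpl INR. rewrite Rplus_0_r. reflexivity.
  - intros k. unfold trigamma_term. rewrite S_INR.
    replace (z + (INR k + 1)) with (z + 1 + INR k) by ring. reflexivity.
Qed.

Lemma Tetragamma_step (z : R) : 0 < z -> Tetragamma z = -2 / z ^ 3 + Tetragamma (z + 1).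
Proof.
  intros Hz. unfold Tetragamma.
  rewrite (series_sum_step _ 4 4 z (tetragamma_majorized z Hz) (tetragamma_majorized (z + 1) ltac:(lra))).
  - unfold tetragamma_term at 1. simpl INR. rewrite Rplus_0_r. reflexivity.
  - intros k. unfold tetragamma_term. rewrite S_INR.
    replace (z + (INR k + 1)) with (z + 1 + INR k) by ring. reflexivity.
Qed.

(* 1/(a+1)^2 <= 1/a - 1/(a+1) telescopes the partial sums of psi'. *)
Lemma Trigamma_bounds (z : R) : 0 < z -> 0 <= Trigamma z <= / z ^ 2 + / z.
Proof.
  intros Hz.
  assert (Hpartial : forall n, 0 <= SP trigamma_term n z <= / z ^ 2 + / z - / (z + INR n)).
  { induction n as [|n IH].
    - change (SP trigamma_term 0 z) with (/ (z + INR 0) ^ 2). rewrite INR_0, !Rplus_0_r.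
      assert (0 < / z ^ 2) by (apply Rinv_0_lt_compat, pow_lt; lra). lra.
    - change (SP trigamma_term (S n) z) with (SP trigamma_term n z + / (z + INR (S n)) ^ 2).
      rewrite S_INR. pose proof (pos_INR n). set (a := z + INR n) in *.
      replace (z + (INR n + 1)) with (a + 1) by (unfold a; ring).
      assert (0 < a) by (unfold a; lra).
      assert (0 < / (a + 1) ^ 2) by (apply Rinv_0_lt_compat, pow_lt; lra).
      assert (/ (a + 1) ^ 2 <= / a - / (a + 1)).
      { replace (/ a - / (a + 1)) with (/ (a * (a + 1))) by (field; lra).
        apply Rinv_le_contravar; nra. }
      lra. }
  pose proof (trigamma_majorized z Hz) as Hmaj. split.
  - apply (series_sum_ge _ _ _ _ Hmaj). intros n. apply Hpartial.
  - apply (series_sum_le _ _ _ _ Hmaj). intros n. destruct (Hpartial n).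
    assert (0 < / (z + INR n)) by (apply Rinv_0_lt_compat; pose proof (pos_INR n); lra). lra.
Qed.

(* 2/(a+1)^3 <= 1/a^2 - 1/(a+1)^2 telescopes the partial sums of psi''. *)
Lemma Tetragamma_bounds (z : R) : 0 < z -> - (2 / z ^ 3 + / z ^ 2) <= Tetragamma z <= 0.
Proof.
  intros Hz.
  assert (Hpartial : forall n,
    - (2 / z ^ 3 + / z ^ 2) + / (z + INR n) ^ 2 <= SP tetragamma_term n z <= 0).
  { induction n as [|n IH].
    - change (SP tetragamma_term 0 z) with (-2 / (z + INR 0) ^ 3). rewrite INR_0, !Rplus_0_r.
      assert (0 < 2 / z ^ 3) by (apply Rdiv_lt_0_compat; [lra | apply pow_lt; lra]).
      unfold Rdiv in *. lra.
    - change (SP tetragamma_term (S n) z) with (SP tetragamma_term n z + -2 / (z + INR (S n)) ^ 3).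
      rewrite S_INR. pose proof (pos_INR n). set (a := z + INR n) in *.
      replace (z + (INR n + 1)) with (a + 1) by (unfold a; ring).
      assert (0 < a) by (unfold a; lra).
      assert (0 < 2 / (a + 1) ^ 3) by (apply Rdiv_lt_0_compat; [lra | apply pow_lt; lra]).
      assert (2 / (a + 1) ^ 3 <= / a ^ 2 - / (a + 1) ^ 2).
      { assert (/ a ^ 2 - / (a + 1) ^ 2 - 2 / (a + 1) ^ 3
                = (3 * a + 1) / (a ^ 2 * (a + 1) ^ 3)) by (field; lra).
        assert (0 <= (3 * a + 1) / (a ^ 2 * (a + 1) ^ 3)).
        { apply Rdiv_le_0_compat; [lra|]. apply Rmult_lt_0_compat; apply pow_lt; lra. }
        lra. }
      unfold Rdiv in *. lra. }
  pose proof (tetragamma_majorized z Hz) as Hmaj. split.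
  - apply (series_sum_ge _ _ _ _ Hmaj). intros n. destruct (Hpartial n).
    assert (0 < / (z + INR n) ^ 2) by (apply Rinv_0_lt_compat, pow_lt; pose proof (pos_INR n); lra). lra.
  - apply (series_sum_le _ _ _ _ Hmaj). intros n. apply Hpartial.
Qed.

Definition decays (G : R -> R) : Prop :=
  exists K, forall z, 1 <= z -> Rabs (G z) <= K / z.

Lemma pos_of_decreasing_steps (G : R -> R) (y : R) :
  0 < y -> (forall z, 0 < z -> G (z + 1) < G z) -> decays G -> 0 < G y.
Proof.
  intros Hy Hstep [K HK].
  assert (Hmono : forall n, G (y + 1 + INR n) <= G (y + 1)).
  { induction n as [|n IH]; [rewrite INR_0, Rplus_0_r; lra|].
    rewrite S_INR. pose proof (pos_INR n).
    replace (y + 1 + (INR n + 1)) with (y + 1 + INR n + 1) by ring.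
    pose proof (Hstep (y + 1 + INR n) ltac:(lra)). lra. }
  pose proof (Hstep y Hy). apply Rnot_le_lt. intros Hle.
  assert (He : 0 < - G (y + 1)) by lra.
  destruct (INR_archimed _ (Rabs K) He) as [n Hn].
  set (z := y + 1 + INR n). pose proof (pos_INR n).
  assert (Hz : 1 <= z) by (unfold z; lra).
  specialize (HK z Hz). specialize (Hmono n). fold z in Hmono.
  assert (Hsmall : K / z < - G (y + 1)).
  { apply Rlt_div_l; [lra|]. pose proof (Rle_abs K).
    assert (INR n * - G (y + 1) <= z * - G (y + 1)) by (apply Rmult_le_compat_r; unfold z; lra). lra. }
  pose proof (Rabs_maj2 (G z)). lra.
Qed.

Lemma decays_plus (f g : R -> R) : decays f -> decays g -> decays (fun z => f z + g z).
Proof.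
  intros [K HK] [L HL]. exists (K + L). intros z Hz.
  specialize (HK z Hz). specialize (HL z Hz).
  pose proof (Rabs_triang (f z) (g z)). unfold Rdiv in *. lra.
Qed.

Lemma decays_minus (f g : R -> R) : decays f -> decays g -> decays (fun z => f z - g z).
Proof.
  intros [K HK] [L HL]. exists (K + L). intros z Hz.
  specialize (HK z Hz). specialize (HL z Hz).
  pose proof (Rabs_triang (f z) (- g z)). rewrite Rabs_Ropp in *. unfold Rdiv, Rminus in *. lra.
Qed.

Lemma decays_sq (f : R -> R) : decays f -> decays (fun z => f z ^ 2).
Proof.
  intros [K HK]. exists (K * K). intros z Hz. specialize (HK z Hz).
  pose proof (Rabs_pos (f z)).
  assert (HKz : K / z <= K).
  { assert (HK0 : 0 <= K / z * z) by (apply Rmult_le_pos; lra).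
    replace (K / z * z) with K in HK0 by (field; lra).
    apply Rle_div_l; nra. }
  rewrite <- RPow_abs. replace (K * K / z) with (K * (K / z)) by (field; lra). nra.
Qed.

Lemma decays_ext (f g : R -> R) : decays g -> (forall z, 1 <= z -> f z = g z) -> decays f.
Proof.
  intros [K HK] Hfg. exists K. intros z Hz. rewrite Hfg by exact Hz. exact (HK z Hz).
Qed.

Lemma decays_inv_monomial (c : R) (k : nat) : 1 <= c -> (1 <= k)%nat -> decays (fun z => / (c * z ^ k)).
Proof.
  intros Hc Hk. exists 1. intros z Hz.
  assert (Hzk : z <= z ^ k).
  { replace k with (S (k - 1)) by lia. simpl.
    assert (1 <= z ^ (k - 1)) by (apply pow_R1_Rle; lra). nra. }
  rewrite Rabs_pos_eq by (apply Rlt_le, Rinv_0_lt_compat; nra).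
  unfold Rdiv. rewrite Rmult_1_l. apply Rinv_le_contravar; nra.
Qed.

Lemma decays_inv_pow (k : nat) : (1 <= k)%nat -> decays (fun z => / z ^ k).
Proof.
  intros Hk. apply (decays_ext _ _ (decays_inv_monomial 1 k (Rle_refl 1) Hk)).
  intros z _. rewrite Rmult_1_l. reflexivity.
Qed.

Lemma decays_inv : decays Rinv.
Proof.
  apply (decays_ext _ _ (decays_inv_pow 1 (le_n 1))). intros z _. rewrite pow_1. reflexivity.
Qed.

Lemma Trigamma_decays : decays Trigamma.
Proof.
  exists 2. intros z Hz. destruct (Trigamma_bounds z ltac:(lra)).
  rewrite Rabs_pos_eq by assumption.
  assert (/ z ^ 2 <= / z) by (apply Rinv_le_contravar; [lra | simpl; nra]).
  unfold Rdiv. lra.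
Qed.

Lemma Tetragamma_decays : decays Tetragamma.
Proof.
  exists 3. intros z Hz. destruct (Tetragamma_bounds z ltac:(lra)).
  rewrite Rabs_left1 by assumption.
  assert (/ z ^ 2 <= / z) by (apply Rinv_le_contravar; [lra | simpl; nra]).
  assert (/ z ^ 3 <= / z) by (apply Rinv_le_contravar; [lra | simpl; nra]).
  unfold Rdiv in *. lra.
Qed.

Ltac decays_rational :=
  repeat first [ apply decays_minus | apply decays_plus ];
  first [ exact decays_inv | apply decays_inv_pow; lia | apply decays_inv_monomial; [lra | lia] ].

(* Truncations of the asymptotic expansions
     psi'(y)  ~ 1/y + 1/(2y^2) + 1/(6y^3) - 1/(30y^5) + ...,
     -psi''(y) ~ 1/y^2 + 1/y^3 + 1/(2y^4) + ...
   and the rational bound of the theorem. *)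
Definition trigamma_lower (y : R) : R := / y + / (2 * y ^ 2) + / (6 * y ^ 3) - / (30 * y ^ 5).
Definition trigamma_upper (y : R) : R := / y + / (2 * y ^ 2) + / (6 * y ^ 3).
Definition neg_tetragamma_upper (y : R) : R := / y ^ 2 + / y ^ 3 + / (2 * y ^ 4).
Definition frac_bound (m y : R) : R := (y ^ 2 + m * y + 12) / (12 * y ^ 4 * (y + 1) ^ 2).

Lemma frac_bound_decays (m : R) : 0 <= m -> decays (frac_bound m).
Proof.
  intros Hm. exists (13 + m). intros z Hz. unfold frac_bound.
  assert (1 <= z ^ 2) by (apply pow_R1_Rle; lra).
  assert (z ^ 2 <= z ^ 3 * (z + 1) ^ 2) by (simpl; nra).
  assert (0 < 12 * z ^ 4 * (z + 1) ^ 2) by (simpl; nra).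
  rewrite Rabs_pos_eq by (apply Rdiv_le_0_compat; nra).
  apply Rle_div_l; [lra|].
  replace ((13 + m) / z * (12 * z ^ 4 * (z + 1) ^ 2))
    with ((13 + m) * (12 * (z ^ 3 * (z + 1) ^ 2))) by (field; lra).
  assert (m * z <= m * (z ^ 3 * (z + 1) ^ 2)) by (apply Rmult_le_compat_l; nra).
  nra.
Qed.

Ltac pos_rational := unfold Rdiv;
  repeat (apply Rplus_lt_0_compat || apply Rmult_lt_0_compat || apply pow_lt
          || apply Rinv_0_lt_compat); lra.

Lemma trigamma_lower_step (z : R) : 0 < z -> trigamma_lower z - trigamma_lower (z + 1) < / z ^ 2.
Proof.
  intros Hz. apply Rlt_0_minus.
  replace (/ z ^ 2 - (trigamma_lower z - trigamma_lower (z + 1)))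
    with ((1 + 5 * z + 5 * z ^ 2) / (30 * z ^ 5 * (z + 1) ^ 5))
    by (unfold trigamma_lower; field; lra).
  pos_rational.
Qed.

Lemma trigamma_upper_step (z : R) : 0 < z -> / z ^ 2 < trigamma_upper z - trigamma_upper (z + 1).
Proof.
  intros Hz. apply Rlt_0_minus.
  replace (trigamma_upper z - trigamma_upper (z + 1) - / z ^ 2)
    with (1 / (6 * z ^ 3 * (z + 1) ^ 3)) by (unfold trigamma_upper; field; lra).
  pos_rational.
Qed.

Lemma neg_tetragamma_upper_step (z : R) :
  0 < z -> 2 / z ^ 3 < neg_tetragamma_upper z - neg_tetragamma_upper (z + 1).
Proof.
  intros Hz. apply Rlt_0_minus.
  replace (neg_tetragamma_upper z - neg_tetragamma_upper (z + 1) - 2 / z ^ 3)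
    with ((1 + 2 * z) / (2 * z ^ 4 * (z + 1) ^ 4)) by (unfold neg_tetragamma_upper; field; lra).
  pos_rational.
Qed.

(* With psi'(z+1) replaced by its bounds, the step of psi'^2 + psi'' - frac_bound
   has a definite sign for m = 0 (lower bound) and m = 4 (upper bound). *)
Lemma double_ineq_lower_step (z : R) :
  0 < z -> 0 < 2 * trigamma_lower (z + 1) / z ^ 2 + / z ^ 4 - 2 / z ^ 3
              - frac_bound 0 z + frac_bound 0 (z + 1).
Proof.
  intros Hz.
  replace (2 * trigamma_lower (z + 1) / z ^ 2 + / z ^ 4 - 2 / z ^ 3
           - frac_bound 0 z + frac_bound 0 (z + 1))
    with ((11 + 36 * z + 49 * z ^ 2 + 25 * z ^ 3) / (15 * z ^ 2 * (z + 1) ^ 5 * (z + 2) ^ 2))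
    by (unfold trigamma_lower, frac_bound; field; lra).
  pos_rational.
Qed.

Lemma double_ineq_upper_step (z : R) :
  0 < z -> 2 * trigamma_upper (z + 1) / z ^ 2 + / z ^ 4 - 2 / z ^ 3
           - frac_bound 4 z + frac_bound 4 (z + 1) < 0.
Proof.
  intros Hz. apply Rlt_0_minus.
  replace (0 - (2 * trigamma_upper (z + 1) / z ^ 2 + / z ^ 4 - 2 / z ^ 3
                - frac_bound 4 z + frac_bound 4 (z + 1)))
    with ((4 + 9 * z + 8 * z ^ 2) / (3 * z ^ 3 * (z + 1) ^ 4 * (z + 2) ^ 2))
    by (unfold trigamma_upper, frac_bound; field; lra).
  pos_rational.
Qed.

Lemma Trigamma_gt_lower (y : R) : 0 < y -> trigamma_lower y < Trigamma y.
Proof.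
  intros Hy. enough (0 < Trigamma y - trigamma_lower y) by lra.
  apply (pos_of_decreasing_steps (fun z => Trigamma z - trigamma_lower z) y Hy).
  - intros z Hz; cbv beta. rewrite (Trigamma_step z Hz).
    pose proof (trigamma_lower_step z Hz). lra.
  - apply decays_minus; [exact Trigamma_decays | unfold trigamma_lower; decays_rational].
Qed.

Lemma Trigamma_lt_upper (y : R) : 0 < y -> Trigamma y < trigamma_upper y.
Proof.
  intros Hy. enough (0 < trigamma_upper y - Trigamma y) by lra.
  apply (pos_of_decreasing_steps (fun z => trigamma_upper z - Trigamma z) y Hy).
  - intros z Hz; cbv beta. rewrite (Trigamma_step z Hz).
    pose proof (trigamma_upper_step z Hz). lra.
  - apply decays_minus; [unfold trigamma_upper; decays_rational | exact Trigamma_decays].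
Qed.

Lemma Tetragamma_gt_lower (y : R) : 0 < y -> - neg_tetragamma_upper y < Tetragamma y.
Proof.
  intros Hy. enough (0 < Tetragamma y + neg_tetragamma_upper y) by lra.
  apply (pos_of_decreasing_steps (fun z => Tetragamma z + neg_tetragamma_upper z) y Hy).
  - intros z Hz; cbv beta. rewrite (Tetragamma_step z Hz).
    pose proof (neg_tetragamma_upper_step z Hz). unfold Rdiv in *. lra.
  - apply decays_plus; [exact Tetragamma_decays | unfold neg_tetragamma_upper; decays_rational].
Qed.

Lemma trigamma_square_step (z P Q : R) :
  0 < z -> (/ z ^ 2 + P) ^ 2 + (-2 / z ^ 3 + Q) - (P ^ 2 + Q) = 2 * P / z ^ 2 + / z ^ 4 - 2 / z ^ 3.
Proof. intros Hz. field. lra. Qed.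

Lemma double_ineq_lower (y : R) : 0 < y -> frac_bound 0 y < Trigamma y ^ 2 + Tetragamma y.
Proof.
  intros Hy. enough (0 < Trigamma y ^ 2 + Tetragamma y - frac_bound 0 y) by lra.
  apply (pos_of_decreasing_steps (fun z => Trigamma z ^ 2 + Tetragamma z - frac_bound 0 z) y Hy).
  - intros z Hz; cbv beta. rewrite (Trigamma_step z Hz), (Tetragamma_step z Hz).
    pose proof (trigamma_square_step z (Trigamma (z + 1)) (Tetragamma (z + 1)) Hz).
    pose proof (double_ineq_lower_step z Hz).
    pose proof (Trigamma_gt_lower (z + 1) ltac:(lra)).
    assert (0 < / z ^ 2) by (apply Rinv_0_lt_compat, pow_lt; lra).
    unfold Rdiv in *. nra.
  - apply decays_minus; [apply decays_plus; [apply decays_sq|] |].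
    + exact Trigamma_decays.
    + exact Tetragamma_decays.
    + apply frac_bound_decays; lra.
Qed.

Lemma double_ineq_upper (y : R) : 0 < y -> Trigamma y ^ 2 + Tetragamma y < frac_bound 4 y.
Proof.
  intros Hy. enough (0 < frac_bound 4 y - (Trigamma y ^ 2 + Tetragamma y)) by lra.
  apply (pos_of_decreasing_steps (fun z => frac_bound 4 z - (Trigamma z ^ 2 + Tetragamma z)) y Hy).
  - intros z Hz; cbv beta. rewrite (Trigamma_step z Hz), (Tetragamma_step z Hz).
    pose proof (trigamma_square_step z (Trigamma (z + 1)) (Tetragamma (z + 1)) Hz).
    pose proof (double_ineq_upper_step z Hz).
    pose proof (Trigamma_lt_upper (z + 1) ltac:(lra)).
    assert (0 < / z ^ 2) by (apply Rinv_0_lt_compat, pow_lt; lra).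
    unfold Rdiv in *. nra.
  - apply decays_minus; [| apply decays_plus; [apply decays_sq|]].
    + apply frac_bound_decays; lra.
    + exact Trigamma_decays.
    + exact Tetragamma_decays.
Qed.

Lemma frac_bound_mono (m m' y : R) : 0 < y -> m <= m' -> frac_bound m y <= frac_bound m' y.
Proof.
  intros Hy Hm. unfold frac_bound, Rdiv. apply Rmult_le_compat_r.
  - apply Rlt_le, Rinv_0_lt_compat. repeat apply Rmult_lt_0_compat; try apply pow_lt; lra.
  - nra.
Qed.

(* Sharpness of mu = 0, at 0+: psi'^2 + psi'' = 1/x^4 - 2/x^3 + O(1/x^2) while
   frac_bound mu x = 1/x^4 + (mu/12 - 2)/x^3 + O(1/x^2); explicitly, for mu > 0
   the lower bound fails at x = min(1, mu/323). *)
Lemma lower_constant_sharp (mu : R) :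
  0 < mu -> exists x, 0 < x /\ Trigamma x ^ 2 + Tetragamma x <= frac_bound mu x.
Proof.
  intros Hmu. set (x := Rmin 1 (mu / 323)). exists x.
  assert (Hx1 : x <= 1) by apply Rmin_l. assert (Hxmu : x <= mu / 323) by apply Rmin_r.
  assert (Hx : 0 < x) by (apply Rmin_pos; lra).
  split; [exact Hx|].
  rewrite (Trigamma_step x Hx), (Tetragamma_step x Hx).
  destruct (Trigamma_bounds (x + 1) ltac:(lra)) as [P0 P1].
  destruct (Tetragamma_bounds (x + 1) ltac:(lra)) as [_ Q0].
  set (P := Trigamma (x + 1)) in *. set (Q := Tetragamma (x + 1)) in *.
  assert (HP : P <= 2).
  { assert (/ (x + 1) ^ 2 <= 1) by (rewrite <- Rinv_1; apply Rinv_le_contravar; [lra | simpl; nra]).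
    assert (/ (x + 1) <= 1) by (rewrite <- Rinv_1; apply Rinv_le_contravar; lra).
    lra. }
  assert (0 < / x ^ 2) by (apply Rinv_0_lt_compat, pow_lt; lra).
  assert ((/ x ^ 2 + P) ^ 2 <= (/ x ^ 2 + 2) ^ 2) by (apply pow_incr; lra).
  assert (Hgap : frac_bound mu x - ((/ x ^ 2 + 2) ^ 2 + -2 / x ^ 3)
    = x * (mu - 11 * x - 72 * x ^ 2 - 96 * x ^ 3 - 96 * x ^ 4 - 48 * x ^ 5)
      / (12 * x ^ 4 * (x + 1) ^ 2)) by (unfold frac_bound; field; lra).
  assert (0 <= x * (mu - 11 * x - 72 * x ^ 2 - 96 * x ^ 3 - 96 * x ^ 4 - 48 * x ^ 5)
               / (12 * x ^ 4 * (x + 1) ^ 2)).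
  { apply Rdiv_le_0_compat; [|repeat apply Rmult_lt_0_compat; try apply pow_lt; lra].
    apply Rmult_le_pos; [lra|].
    assert (x ^ 2 <= x) by (simpl; nra).
    assert (x ^ 3 <= x ^ 2) by (simpl; nra).
    assert (x ^ 4 <= x ^ 3) by (simpl; nra).
    assert (x ^ 5 <= x ^ 4) by (simpl; nra).
    lra. }
  lra.
Qed.

(* The lower truncation is positive on [1, oo), so the bound can be squared. *)
Lemma trigamma_lower_pos (x : R) : 1 <= x -> 0 < trigamma_lower x.
Proof.
  intros Hx. unfold trigamma_lower.
  replace (/ x + / (2 * x ^ 2) + / (6 * x ^ 3) - / (30 * x ^ 5))
    with ((30 * x ^ 4 + 15 * x ^ 3 + 5 * x ^ 2 - 1) / (30 * x ^ 5)) by (field; lra).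
  assert (1 <= x ^ 2) by (apply pow_R1_Rle; lra).
  assert (1 <= x ^ 3) by (apply pow_R1_Rle; lra).
  assert (1 <= x ^ 4) by (apply pow_R1_Rle; lra).
  apply Rdiv_lt_0_compat; [lra | apply Rmult_lt_0_compat; [lra | apply pow_lt; lra]].
Qed.

(* Sharpness of nu = 4, at +oo: psi'^2 + psi'' = 1/(12x^4) + 1/(6x^5) + O(1/x^6)
   while frac_bound nu x = 1/(12x^4) + (nu - 2)/(12x^5) + O(1/x^6); explicitly,
   for nu < 4 the upper bound fails at x = 10/(4 - nu) + 1. *)
Lemma upper_constant_sharp (nu : R) :
  nu < 4 -> exists x, 0 < x /\ frac_bound nu x <= Trigamma x ^ 2 + Tetragamma x.
Proof.
  intros Hnu. set (d := 4 - nu). assert (Hd : 0 < d) by (unfold d; lra).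
  set (x := 10 / d + 1).
  assert (Hx : 1 <= x) by (unfold x; assert (0 < 10 / d) by (apply Rdiv_lt_0_compat; lra); lra).
  assert (Hdx : 10 <= d * x) by (unfold x; replace (d * (10 / d + 1)) with (10 + d) by (field; lra); lra).
  exists x. split; [lra|].
  pose proof (Trigamma_gt_lower x ltac:(lra)). pose proof (Tetragamma_gt_lower x ltac:(lra)).
  pose proof (trigamma_lower_pos x Hx).
  assert (trigamma_lower x ^ 2 <= Trigamma x ^ 2) by (apply pow_incr; lra).
  set (N := 3456 + 6912 * x - 31104 * x ^ 2 - 172800 * x ^ 3 - 362880 * x ^ 4
            + 172800 * x ^ 5 - 1935360 * x ^ 6 + 259200 * d * x ^ 7).
  assert (Hgap : trigamma_lower x ^ 2 - neg_tetragamma_upper x - frac_bound nu x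
                 = N / (3110400 * x ^ 10 * (x + 1) ^ 2)).
  { unfold N, trigamma_lower, neg_tetragamma_upper, frac_bound, d. field. lra. }
  assert (HN : 0 <= N).
  { assert (1 <= x ^ 6) by (apply pow_R1_Rle; lra).
    assert (x ^ 2 <= x ^ 6) by (apply Rle_pow; lra || lia).
    assert (x ^ 3 <= x ^ 6) by (apply Rle_pow; lra || lia).
    assert (x ^ 4 <= x ^ 6) by (apply Rle_pow; lra || lia).
    assert (0 <= x ^ 5) by (apply pow_le; lra).
    assert (10 * x ^ 6 <= d * x * x ^ 6) by (apply Rmult_le_compat_r; lra).
    unfold N. replace (259200 * d * x ^ 7) with (259200 * (d * x * x ^ 6)) by ring.
    lra. }
  assert (0 <= N / (3110400 * x ^ 10 * (x + 1) ^ 2)).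
  { apply Rdiv_le_0_compat; [exact HN|]. repeat apply Rmult_lt_0_compat; try apply pow_lt; lra. }
  lra.
Qed.

Theorem theorem1p1 (mu nu : R) :
  (forall x : R, 0 < x ->
     (x ^ 2 + mu * x + 12) / (12 * x ^ 4 * (x + 1) ^ 2) < psi1 x ^ 2 + psi2 x /\
     psi1 x ^ 2 + psi2 x < (x ^ 2 + nu * x + 12) / (12 * x ^ 4 * (x + 1) ^ 2))
  <-> (mu <= 0 /\ nu >= 4).
Proof.
  assert (Hpsi : forall x, 0 < x -> psi1 x ^ 2 + psi2 x = Trigamma x ^ 2 + Tetragamma x).
  { intros x Hx. rewrite psi1_eq_Trigamma, psi2_eq_Tetragamma by exact Hx. reflexivity. }
  split.
  - intros Hbounds. split.
    + apply Rnot_lt_le. intros Hmu.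
      destruct (lower_constant_sharp mu Hmu) as (x & Hx & Hle).
      destruct (Hbounds x Hx) as [Hlow _]. rewrite Hpsi in Hlow by exact Hx.
      fold (frac_bound mu x) in Hlow. lra.
    + apply Rnot_lt_ge. intros Hnu.
      destruct (upper_constant_sharp nu Hnu) as (x & Hx & Hle).
      destruct (Hbounds x Hx) as [_ Hup]. rewrite Hpsi in Hup by exact Hx.
      fold (frac_bound nu x) in Hup. lra.
  - intros [Hmu Hnu] x Hx. rewrite Hpsi by exact Hx.
    fold (frac_bound mu x) (frac_bound nu x).
    pose proof (frac_bound_mono mu 0 x Hx Hmu). pose proof (frac_bound_mono 4 nu x Hx ltac:(lra)).
    pose proof (double_ineq_lower x Hx). pose proof (double_ineq_upper x Hx).
    split; lra.
Qed.
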